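(* Let $X$ be a finite alphabet, $\#$ a symbol not in $X$, and $X^\# = X \cup \{\#\}$. Let $w \in (\overline{X^\#})^*$ be a word representing the identity in the polycyclic monoid $P(X^\#)$, and suppose $w = uv$. Then there exists a factorisation $v = st$ such that (i) either $t = \epsilon$ or $t$ begins with a negative generator, and (ii) the word $u \# s \#^{-1} t$ also represents the identity in $P(X^\#)$.
   Context: For an alphabet $Y$, $\overline{Y} = \{y, y^{-1} : y \in Y\}$; letters of $Y$ are positive generators and letters $y^{-1}$ negative generators. The polycyclic monoid $P(Y)$ is the monoid of partial functions on $Y^*$ (composed left to right: $fg$ means apply $f$ then $g$) generated by $y: z \mapsto zy$ (defined everywhere) and $y^{-1}: zy \mapsto z$ (defined on $Y^*y$), $y \in Y$; a word over $\overline{Y}$ represents the identity of $P(Y)$ exactly when it can be reduced to the empty word by successively deleting factors $yy^{-1}$ with $y \in Y$. $\epsilon$ denotes the empty word. *)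

From mathcomp Require Import all_boot.
From Stdlib Require Import Relations.

Set Implicit Arguments.
Unset Strict Implicit.
Unset Printing Implicit Defensive.

Inductive gen (Y : Type) : Type :=
  | Pos : Y -> gen Y
  | Neg : Y -> gen Y.

Inductive red_step (Y : Type) : seq (gen Y) -> seq (gen Y) -> Prop :=
  | RedStep (a b : seq (gen Y)) (y : Y) :
      red_step (a ++ [:: Pos y; Neg y] ++ b) (a ++ b).

(* w represents the identity of the polycyclic monoid P(Y) iff it reduces
   to the empty word by successively deleting factors y y^{-1}. *)
Definition rep_identity (Y : Type) (w : seq (gen Y)) : Prop :=
  clos_refl_trans _ (@red_step Y) w [::].

(* X^# = X ∪ {#}, with # = None a fresh symbol not in X. *)
Definition sharp (X : Type) : option X := None.

(* A word represents the identity iff the stack machine that pushes y on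
   reading y and pops a matching y on reading y^{-1} turns the empty stack
   into the empty stack.  Walk along v from the empty stack and stop at the
   first letter that cannot be read (or at the end of v): this gives v = s t
   with t empty or starting with y^{-1}, and s leaves a stack m.  Read after u,
   which leaves a stack σ, the prefix s leaves m σ, and t must then empty the
   stack although its first step is impossible on m; so m is empty.  Hence s
   returns the stack to σ even when # is pushed below its contents, so
   u # s #^{-1} t runs exactly like u s t. *)

From mathcomp Require Import all_boot.
From Stdlib Require Import Relations.

Set Implicit Arguments.
Unset Strict Implicit.
Unset Printing Implicit Defensive.

Section StackMachine.

Variable Y : eqType.

Notation word := (seq (gen Y)).
Notation reduces := (clos_refl_trans _ (@red_step Y)).

(* The top of the stack is the head of the list. *)
Fixpoint run (st : seq Y) (w : word) : option (seq Y) :=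
  match w with
  | [::] => Some st
  | Pos y :: w' => run (y :: st) w'
  | Neg y :: w' =>
      if st is x :: st' then (if x == y then run st' w' else None) else None
  end.

Definition stops (m : seq Y) (t : word) : bool :=
  if t is a :: _ then run m [:: a] == None else true.

Definition pushes (st : seq Y) : word := map (@Pos Y) (rev st).

Lemma run_cat st a b : run st (a ++ b) = obind (run^~ b) (run st a).
Proof.
elim: a st => [|[y|y] a IH] st //=.
by case: st => [|x st] //; case: (x == y).
Qed.

Lemma run_catr st st' b s :
  run st s = Some st' -> run (st ++ b) s = Some (st' ++ b).
Proof.
elim: s st => [|[y|y] s IH] st /=; first by case=> ->.
  exact: IH.
by case: st => [|x st] //=; case: (x == y) => //; apply: IH.
Qed.

Lemma run_red a b : reduces a b -> forall st, run st a = run st b.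
Proof.
elim=> // [_ _ [a0 b0 y] st | x y z _ IHxy _ IHyz st].
  by rewrite !run_cat; case: (run st a0) => //= st'; rewrite eqxx.
by rewrite IHxy IHyz.
Qed.

Lemma red_run st st' w :
  run st w = Some st' -> reduces (pushes st ++ w) (pushes st').
Proof.
rewrite /pushes; elim: w st => [|[y|y] w IH] st /=.
- by case=> ->; rewrite cats0; apply: rt_refl.
- by move/IH; rewrite rev_cons map_rcons -cats1 -catA.
- case: st => [|x st] //; case: eqP => // -> /IH red_w.
  apply: rt_trans red_w; apply: rt_step.
  rewrite rev_cons map_rcons -cats1 -catA.
  exact: RedStep.
Qed.

Lemma rep_identityP w : rep_identity w <-> run [::] w = Some [::].
Proof.
split=> [red_w | /red_run //]; exact: run_red red_w [::].
Qed.

Lemma stops_cons m a t : stops m (a :: t) -> exists y, a = Neg y.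
Proof. by case: a => y //=; exists y. Qed.

Lemma stops_run_nil m sig t :
  stops m t -> run (m ++ sig) t = Some [::] -> m = [::].
Proof.
case: t => [_ | [y|y] t] //=; first by case: m.
by case: m => [|x m] //=; case: (x == y).
Qed.

Lemma run_stops_factor m0 v :
  exists s t m, [/\ v = s ++ t, run m0 s = Some m & stops m t].
Proof.
elim: v m0 => [|[y|y] v IH] m0; first by exists [::], [::], m0.
  have [s [t [m [-> run_s stops_t]]]] := IH (y :: m0).
  by exists (Pos y :: s), t, m.
case run_y: (run m0 [:: Neg y]); last by exists [::], (Neg y :: v), m0; rewrite /stops run_y.
move: run_y; case: m0 => [|x m0] //=; case: eqP => // -> _.
have [s [t [m [-> run_s stops_t]]]] := IH m0.
by exists (Neg y :: s), t, m; rewrite /= eqxx.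
Qed.

End StackMachine.

Theorem lemma4p9 (X : finType) (w u v : seq (gen (option X))) :
  rep_identity w -> w = u ++ v ->
  exists s t : seq (gen (option X)),
    v = s ++ t /\
    (t = [::] \/ exists (y : option X) (t' : seq (gen (option X))), t = Neg y :: t') /\
    rep_identity (u ++ [:: Pos (sharp X)] ++ s ++ [:: Neg (sharp X)] ++ t).
Proof.
move=> /rep_identityP run_w Ew.
have [s [t [m [Ev run_s stops_t]]]] := run_stops_factor [::] v.
move: run_w; rewrite {w}Ew {v}Ev run_cat; case run_u: (run [::] u) => [sig|] //=.
rewrite run_cat (run_catr sig run_s) /= => run_t.
have m_nil := stops_run_nil stops_t run_t; subst m.
exists s, t; split=> //; split.
  case: t stops_t {run_t} => [|a t' /stops_cons [y ->]]; first by left.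
  by right; exists y, t'.
apply/rep_identityP.
by rewrite run_cat run_u /= run_cat (run_catr (sharp X :: sig) run_s) /=.
Qed.
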